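(* Let $(P,\mathcal T)$ be a hybrid program and $='$ a binary constraint predicate interpreted in every model of $\mathcal T$ as the identity relation. Suppose that in every rule $H\leftarrow C,L_1,\dots,L_n$ of $P$ all arguments of the head $H=p(s_1,\dots,s_m)$ are variables, and every variable occurs at most once in $H,L_1,\dots,L_n$ altogether (other occurrences may only be in $C$). Then $P$ is congruent w.r.t. $\mathcal T$: for every rule predicate $p$ of arity $m$ and ground terms $t_1,\dots,t_m,u_1,\dots,u_m$ with $\mathcal T\models t_1='u_1\wedge\dots\wedge t_m='u_m$, $(P,\mathcal T)\models_{\mathrm{wf}}p(\bar t)$ iff $(P,\mathcal T)\models_{\mathrm{wf}}p(\bar u)$.
   Context: Fix a first-order alphabet: a set $\mathcal F$ of function symbols containing at least one constant, a set of variables, and predicate symbols partitioned into rule predicates $\mathcal P_R$ and constraint predicates $\mathcal P_C$. An external theory $\mathcal T$ is a set of first-order axioms over $\mathcal P_C,\mathcal F$ with standard 2-valued semantics; certain formulas over $\mathcal P_C,\mathcal F$ are called constraints. A hybrid rule is $H\leftarrow C,L_1,\dots,L_n$ with $H$ a rule atom, $L_i$ rule literals, $C$ a constraint; a hybrid program is $(P,\mathcal T)$ with $P$ a set of hybrid rules. For a model $M_0$ of $\mathcal T$, $P/M_0$ is the ground normal program of all $H\theta\leftarrow L_1\theta,\dots,L_n\theta$ with $\theta$ mapping the free variables of a rule $H\leftarrow C,\bar L$ of $P$ to ground terms and $M_0\models C\theta$. $WF(Q)$ denotes the (3-valued Herbrand) well-founded model of a ground normal program $Q$. $(P,\mathcal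 T)\models_{\mathrm{wf}}F$ iff $F$ is true (3-valued) in $WF(P/M_0)$ for every model $M_0$ of $\mathcal T$. *)

From Stdlib Require Import List Arith.
Import ListNotations.
Set Implicit Arguments.

(* Function symbols, rule predicates P_R and constraint predicates P_C
   (two disjoint types = a partition), each with an arity.  Variables are nat. *)
Record signature := {
  Fsym : Type;  farity : Fsym -> nat;
  PR   : Type;  rarity : PR -> nat;
  PC   : Type;  carity : PC -> nat
}.

Section Syntax.
Variable S : signature.

Inductive term : Type :=
| TVar (x : nat)
| TApp (f : Fsym S) (args : list term).

Inductive gterm : Type :=
| GApp (f : Fsym S) (args : list gterm).

Fixpoint wf_term (t : term) : Prop :=
  match t with
  | TVar _ => True
  | TApp f args => length args = farity S f /\
      (fix go (l : list term) : Prop :=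
         match l with nil => True | a :: l' => wf_term a /\ go l' end) args
  end.

Fixpoint wf_gterm (t : gterm) : Prop :=
  match t with
  | GApp f args => length args = farity S f /\
      (fix go (l : list gterm) : Prop :=
         match l with nil => True | a :: l' => wf_gterm a /\ go l' end) args
  end.

Fixpoint to_term (t : gterm) : term :=
  match t with GApp f args => TApp f (map to_term args) end.

Fixpoint occ (t : term) : list nat :=
  match t with
  | TVar x => [x]
  | TApp _ args => flat_map occ args
  end.

Fixpoint gsubst (th : nat -> gterm) (t : term) : gterm :=
  match t with
  | TVar x => th x
  | TApp f args => GApp f (map (gsubst th) args)
  end.

Inductive formula : Type :=
| FTrue | FFalse
| FAtom (c : PC S) (args : list term)
| FEq (t u : term)
| FNot (phi : formula)
| FAnd (phi psi : formula)
| FOr (phi psi : formula)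
| FImp (phi psi : formula)
| FAll (x : nat) (phi : formula)
| FEx (x : nat) (phi : formula).

Fixpoint wf_formula (phi : formula) : Prop :=
  match phi with
  | FTrue | FFalse => True
  | FAtom c args => length args = carity S c /\ Forall wf_term args
  | FEq t u => wf_term t /\ wf_term u
  | FNot p => wf_formula p
  | FAnd p q | FOr p q | FImp p q => wf_formula p /\ wf_formula q
  | FAll _ p | FEx _ p => wf_formula p
  end.

Record ratom := { apred : PR S; aargs : list term }.
Inductive literal := LPos (a : ratom) | LNeg (a : ratom).
Definition lit_atom (l : literal) : ratom :=
  match l with LPos a => a | LNeg a => a end.

Record rule := { rhead : ratom; rconstr : formula; rbody : list literal }.

Definition wf_ratom (a : ratom) : Prop :=
  length (aargs a) = rarity S (apred a) /\ Forall wf_term (aargs a).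

Definition wf_rule (r : rule) : Prop :=
  wf_ratom (rhead r) /\ wf_formula (rconstr r) /\
  Forall (fun l => wf_ratom (lit_atom l)) (rbody r).

Definition linear_rule (r : rule) : Prop :=
  Forall (fun s => exists x, s = TVar x) (aargs (rhead r)) /\
  NoDup (flat_map occ (aargs (rhead r)) ++
         flat_map (fun l => flat_map occ (aargs (lit_atom l))) (rbody r)).

(* A structure: domain, interpretation of function symbols and constraint
   predicates (given on lists; only argument lists of the right arity matter). *)
Record structure := {
  dom  : Type;
  fint : Fsym S -> list dom -> dom;
  pint : PC S -> list dom -> Prop
}.

Fixpoint eval (M : structure) (rho : nat -> dom M) (t : term) : dom M :=
  match t with
  | TVar x => rho x
  | TApp f args => fint M f (map (eval M rho) args)
  end.

Fixpoint geval (M : structure) (t : gterm) : dom M :=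
  match t with GApp f args => fint M f (map (geval M) args) end.

Definition upd (M : structure) (rho : nat -> dom M) (x : nat) (d : dom M) :
  nat -> dom M := fun y => if Nat.eqb y x then d else rho y.

Fixpoint sat (M : structure) (rho : nat -> dom M) (phi : formula) : Prop :=
  match phi with
  | FTrue => True
  | FFalse => False
  | FAtom c args => pint M c (map (eval M rho) args)
  | FEq t u => eval M rho t = eval M rho u
  | FNot p => ~ sat M rho p
  | FAnd p q => sat M rho p /\ sat M rho q
  | FOr p q => sat M rho p \/ sat M rho q
  | FImp p q => sat M rho p -> sat M rho q
  | FAll x p => forall d, sat M (upd M rho x d) p
  | FEx x p => exists d, sat M (upd M rho x d) p
  end.

(* M is a model of the theory T (axioms with free variables read universally) *)
Definition is_model (M : structure) (T : formula -> Prop) : Prop :=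
  forall phi, T phi -> forall rho, sat M rho phi.

Definition entails (T : formula -> Prop) (phi : formula) : Prop :=
  forall M : structure, is_model M T -> forall rho, sat M rho phi.

Definition sat_inst (M : structure) (th : nat -> gterm) (C : formula) : Prop :=
  sat M (fun x => geval M (th x)) C.

Definition gatom : Type := (PR S * list gterm)%type.

Record grule := { ghead : gatom; gpos : list gatom; gneg : list gatom }.

Definition ground_atom (th : nat -> gterm) (a : ratom) : gatom :=
  (apred a, map (gsubst th) (aargs a)).

Definition ground_rule (r : rule) (th : nat -> gterm) : grule :=
  {| ghead := ground_atom th (rhead r);
     gpos := flat_map (fun l => match l with LPos a => [ground_atom th a] | LNeg _ => [] end) (rbody r);
     gneg := flat_map (fun l => match l with LNeg a => [ground_atom th a] | LPos _ => [] end) (rbody r) |}.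

Definition ground_prog (P : rule -> Prop) (M : structure) : grule -> Prop :=
  fun g => exists r th, P r /\ (forall x, wf_gterm (th x)) /\
           sat_inst M th (rconstr r) /\ g = ground_rule r th.

(* Gelfond-Lifschitz-style operator: Gamma_Q(J) = least model of Q^J *)
Definition closed_under (Q : grule -> Prop) (J X : gatom -> Prop) : Prop :=
  forall g, Q g -> (forall a, In a (gpos g) -> X a) ->
    (forall a, In a (gneg g) -> ~ J a) -> X (ghead g).

Definition Gamma (Q : grule -> Prop) (J : gatom -> Prop) : gatom -> Prop :=
  fun a => forall X, closed_under Q J X -> X a.

(* Well-founded model (Van Gelder's alternating fixpoint):
   true atoms = lfp(Gamma o Gamma), false atoms = complement of Gamma(lfp). *)
Definition wf_true (Q : grule -> Prop) : gatom -> Prop :=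
  fun a => forall X, (forall b, Gamma Q (Gamma Q X) b -> X b) -> X a.

Definition wf_false (Q : grule -> Prop) : gatom -> Prop :=
  fun a => ~ Gamma Q (wf_true Q) a.

Definition wf_entails (P : rule -> Prop) (T : formula -> Prop) (A : gatom) : Prop :=
  forall M : structure, is_model M T -> wf_true (ground_prog P M) A.

Definition eq_conj (eqc : PC S) (ts us : list gterm) : formula :=
  fold_right (fun tu phi => FAnd (FAtom eqc [to_term (fst tu); to_term (snd tu)]) phi)
             FTrue (combine ts us).

End Syntax.

(* Fix a model M of the theory and call two ground atoms M-equivalent when
   they have the same predicate and pointwise M-equal arguments.  The proof
   has a semantic half and a syntactic half.

   Semantic half (any ground normal program Q and any relation R on atoms):
   if Q is "head-closed" under R, i.e. every rule of Q can have its head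
   replaced by any R-related atom while keeping its body, then Gamma_Q(J) is
   closed under R for every J, and hence so is the least fixpoint of
   Gamma_Q o Gamma_Q, the set of well-founded-true atoms.

   Syntactic half: when every rule is linear (variable head arguments, no
   repeated variable among head and body), the grounding P/M is head-closed
   under M-equivalence: a new ground head is obtained by re-instantiating
   only the head variables, which leaves the body atoms unchanged and the
   constraint satisfied, as the new values are M-equal to the old ones.

   Finally T |= t =' u with =' the identity yields M-equivalence of p(t)
   and p(u) in every model M, from which the theorem follows. *)

From Stdlib Require Import List Arith FunctionalExtensionality.
Import ListNotations.

Section GroundPrograms.
Context {S : signature}.

Definition head_closed (R : gatom S -> gatom S -> Prop) (Q : grule S -> Prop) :
  Prop :=
  forall g, Q g -> forall h, R (ghead g) h ->
  exists g', Q g' /\ ghead g' = h /\ gpos g' = gpos g /\ gneg g' = gneg g.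

Definition rel_closed (R : gatom S -> gatom S -> Prop) (X : gatom S -> Prop) :
  Prop :=
  forall a a', R a a' -> X a -> X a'.

Lemma Gamma_antitone (Q : grule S -> Prop) (J J' : gatom S -> Prop) :
  (forall b, J b -> J' b) -> forall a, Gamma Q J' a -> Gamma Q J a.
Proof.
  intros HJ a HG X HX. apply HG. intros g Hg Hpos Hneg. apply HX; auto.
  intros b Hb HJb. exact (Hneg b Hb (HJ b HJb)).
Qed.

(* For head-closed Q, the least model of Q^J is R-closed: the largest
   R-closed subset of any Q^J-closed set is again Q^J-closed. *)
Lemma Gamma_rel_closed (R : gatom S -> gatom S -> Prop) (Q : grule S -> Prop)
  (J : gatom S -> Prop) :
  head_closed R Q -> rel_closed R (Gamma Q J).
Proof.
  intros HQ a a' Hr HG X HX.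
  set (Y := fun b => X b /\ forall b', R b b' -> X b').
  assert (HY : closed_under Q J Y).
  { intros g Hg Hpos Hneg. split.
    - apply HX; [exact Hg | | exact Hneg]. intros b Hb. exact (proj1 (Hpos b Hb)).
    - intros h Hh. destruct (HQ g Hg h Hh) as [g' [Hg' [<- [Epos Eneg]]]].
      apply HX; [exact Hg' | rewrite Epos | rewrite Eneg]; auto.
      intros b Hb. exact (proj1 (Hpos b Hb)). }
  exact (proj2 (HG Y HY) a' Hr).
Qed.

(* The well-founded-true atoms of a head-closed program are R-closed:
   the R-closed part of a pre-fixpoint of Gamma_Q o Gamma_Q is again one. *)
Lemma wf_true_rel_closed (R : gatom S -> gatom S -> Prop) (Q : grule S -> Prop) :
  head_closed R Q -> rel_closed R (wf_true Q).
Proof.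
  intros HQ a a' Hr Ht X HX.
  set (Y := fun b => X b /\ forall b', R b b' -> X b').
  assert (Hmono : forall b, Gamma Q (Gamma Q Y) b -> Gamma Q (Gamma Q X) b).
  { apply Gamma_antitone, Gamma_antitone. intros b [Hb _]; exact Hb. }
  assert (HY : forall b, Gamma Q (Gamma Q Y) b -> Y b).
  { intros b Hb. split.
    - apply HX, Hmono, Hb.
    - intros b' Hb'. apply HX, Hmono.
      exact (@Gamma_rel_closed R Q (Gamma Q Y) HQ _ _ Hb' Hb). }
  exact (proj2 (Ht Y HY) a' Hr).
Qed.

End GroundPrograms.

Section Grounding.
Context {S : signature}.
Variable M : structure S.

(* Ground argument lists that are pointwise M-equal, the targets being
   well-formed (so that they are admissible values of a substitution). *)
Definition equiv_args : list (gterm S) -> list (gterm S) -> Prop :=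
  Forall2 (fun v w => geval M v = geval M w /\ wf_gterm w).

Definition equiv_atom (a b : gatom S) : Prop :=
  fst a = fst b /\ equiv_args (snd a) (snd b).

Fixpoint gsubst_agree (th th' : nat -> gterm S) (t : term S) {struct t} :
  (forall y, In y (occ t) -> th y = th' y) -> gsubst th t = gsubst th' t.
Proof.
  destruct t as [x | f args]; simpl; intros Hagree.
  - apply Hagree; left; reflexivity.
  - f_equal. induction args as [| a l IHl]; simpl in *; [reflexivity |].
    f_equal.
    + apply gsubst_agree. intros y Hy. apply Hagree, in_or_app; auto.
    + apply IHl. intros y Hy. apply Hagree, in_or_app; auto.
Qed.

Lemma reinstantiate_vars (args : list (term S)) (ws : list (gterm S))
  (th : nat -> gterm S) :
  Forall (fun s => exists x, s = TVar S x) args ->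
  NoDup (flat_map (@occ S) args) ->
  equiv_args (map (gsubst th) args) ws ->
  (forall y, wf_gterm (th y)) ->
  exists th', map (gsubst th') args = ws /\
    (forall y, ~ In y (flat_map (@occ S) args) -> th' y = th y) /\
    (forall y, geval M (th' y) = geval M (th y)) /\
    (forall y, wf_gterm (th' y)).
Proof.
  revert ws. induction args as [| a args IH]; intros ws Hvars Hnodup Hequiv Hwf.
  - inversion Hequiv; subst. exists th. repeat split; auto.
  - inversion Hvars as [| ? ? [x ->] Hvars']; subst.
    inversion Hequiv as [| ? w ? ws' [Hw Hwfw] Hequiv']; subst.
    simpl in Hnodup. inversion Hnodup as [| ? ? Hx_fresh Hnodup']; subst.
    destruct (IH ws' Hvars' Hnodup' Hequiv' Hwf) as [th0 [Hinst [Hout [Heval Hwf0]]]].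
    exists (fun y => if Nat.eqb y x then w else th0 y). repeat split.
    + simpl. rewrite Nat.eqb_refl. f_equal. rewrite <- Hinst.
      apply map_ext_in. intros b Hb.
      rewrite Forall_forall in Hvars'. destruct (Hvars' b Hb) as [z ->]. simpl.
      destruct (Nat.eqb_spec z x) as [-> |]; [| reflexivity].
      exfalso. apply Hx_fresh, in_flat_map. exists (TVar S x). simpl; auto.
    + intros y Hy. destruct (Nat.eqb_spec y x) as [-> |].
      * exfalso. apply Hy. left; reflexivity.
      * apply Hout. intro Hc. apply Hy. right; exact Hc.
    + intros y. destruct (Nat.eqb_spec y x) as [-> |]; [symmetry; exact Hw | apply Heval].
    + intros y. destruct (Nat.eqb_spec y x); auto.
Qed.

Lemma NoDup_app_disjoint {A : Type} (l l' : list A) :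
  NoDup (l ++ l') -> forall y, In y l -> ~ In y l'.
Proof.
  induction l as [| a l IH]; simpl; intros Hnd y Hy; [contradiction |].
  inversion Hnd as [| ? ? Ha_fresh Hnd']; subst. destruct Hy as [-> | Hy].
  - intro Hy'. apply Ha_fresh, in_or_app. right; exact Hy'.
  - exact (IH Hnd' y Hy).
Qed.

Lemma flat_map_ext_in {A B : Type} (f g : A -> list B) (l : list A) :
  (forall a, In a l -> f a = g a) -> flat_map f l = flat_map g l.
Proof.
  induction l as [| a l IH]; simpl; intros Hfg; auto.
  rewrite Hfg by auto. f_equal. auto.
Qed.

Lemma ground_body_agree (r : rule S) (th th' : nat -> gterm S) :
  (forall y, In y (flat_map (fun l => flat_map (@occ S) (aargs (lit_atom l))) (rbody r)) ->
             th' y = th y) ->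
  gpos (ground_rule r th') = gpos (ground_rule r th) /\
  gneg (ground_rule r th') = gneg (ground_rule r th).
Proof.
  intros Hagree.
  assert (Hlit : forall l, In l (rbody r) ->
            ground_atom th' (lit_atom l) = ground_atom th (lit_atom l)).
  { intros l Hl. unfold ground_atom. f_equal. apply map_ext_in. intros t Ht.
    apply gsubst_agree. intros y Hy. apply Hagree, in_flat_map.
    exists l. split; [exact Hl |]. apply in_flat_map. eauto. }
  simpl. split; apply flat_map_ext_in; intros l Hl;
    specialize (Hlit l Hl); destruct l; simpl in *; rewrite ?Hlit; reflexivity.
Qed.

Lemma ground_prog_head_closed (P : rule S -> Prop) :
  (forall r, P r -> linear_rule r) ->
  head_closed equiv_atom (ground_prog P M).
Proof.
  intros hlin g [r [th [Pr [Hwf [Hsat ->]]]]] [q ws] [Hq Hequiv].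
  destruct (hlin r Pr) as [Hvars Hnodup]. simpl in Hq, Hequiv. subst q.
  destruct (reinstantiate_vars _ ws th Hvars (NoDup_app_remove_r _ _ Hnodup) Hequiv Hwf)
    as [th' [Hinst [Hout [Heval Hwf']]]].
  destruct (ground_body_agree r th th') as [Hpos Hneg].
  { intros y Hy. apply Hout. intro Hhead.
    exact (NoDup_app_disjoint _ _ Hnodup y Hhead Hy). }
  exists (ground_rule r th'). repeat split; auto.
  - exists r, th'. repeat split; auto.
    unfold sat_inst in *.
    replace (fun x => geval M (th' x)) with (fun x => geval M (th x)); auto.
    apply functional_extensionality. intros; auto.
  - simpl. unfold ground_atom. rewrite Hinst. reflexivity.
Qed.

Fixpoint eval_to_term (rho : nat -> dom M) (t : gterm S) {struct t} :
  eval M rho (to_term t) = geval M t.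
Proof.
  destruct t as [f args]; simpl. f_equal.
  induction args as [| a l IHl]; simpl; [reflexivity |].
  rewrite eval_to_term, IHl. reflexivity.
Qed.

Lemma sat_eq_conj (eqc : PC S) (rho : nat -> dom M) (ts us : list (gterm S)) :
  (forall d e : dom M, pint M eqc [d; e] <-> d = e) ->
  length ts = length us ->
  sat M rho (eq_conj eqc ts us) ->
  Forall2 (fun v w => geval M v = geval M w) ts us.
Proof.
  intros Hid. revert us.
  induction ts as [| t ts IH]; intros [| u us] Hlen Hsat; simpl in *;
    try discriminate; auto.
  destruct Hsat as [Heq Hrest]. constructor; auto.
  apply Hid in Heq. rewrite !eval_to_term in Heq. exact Heq.
Qed.

Lemma equiv_args_of_geval (ts us : list (gterm S)) :
  Forall2 (fun v w => geval M v = geval M w) ts us ->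
  Forall (@wf_gterm S) us -> equiv_args ts us.
Proof.
  unfold equiv_args. intros Heq Hwf. revert Hwf.
  induction Heq as [| v w vs ws Hvw Heq IH]; intros Hwf; constructor;
    inversion Hwf; auto.
Qed.

End Grounding.

Theorem mainTheorem3 (S : signature)
  (hconst : exists c : Fsym S, farity S c = 0)
  (T : formula S -> Prop) (hT : forall phi, T phi -> wf_formula phi)
  (P : rule S -> Prop) (hP : forall r, P r -> wf_rule r)
  (eqc : PC S) (heqc : carity S eqc = 2)
  (heq_id : forall M : structure S, is_model M T ->
              forall d e : dom M, pint M eqc [d; e] <-> d = e)
  (hlin : forall r, P r -> linear_rule r) :
  forall (p : PR S) (ts us : list (gterm S)),
    length ts = rarity S p -> length us = rarity S p ->
    Forall (@wf_gterm S) ts -> Forall (@wf_gterm S) us ->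
    entails T (eq_conj eqc ts us) ->
    (wf_entails P T (p, ts) <-> wf_entails P T (p, us)).
Proof.
  intros p ts us Lt Lu Wt Wu Hent.
  destruct hconst as [c _].
  (* In every model, ts and us are pointwise equal (a constant gives a valuation). *)
  assert (Hgeval : forall M, is_model M T ->
            Forall2 (fun v w => geval M v = geval M w) ts us).
  { intros M HM. apply (sat_eq_conj M eqc (fun _ => fint M c [])).
    - exact (heq_id M HM).
    - congruence.
    - exact (Hent M HM _). }
  assert (Hts_us : forall M, is_model M T -> equiv_atom M (p, ts) (p, us)).
  { intros M HM. split; [reflexivity |].
    exact (equiv_args_of_geval M ts us (Hgeval M HM) Wu). }
  assert (Hus_ts : forall M, is_model M T -> equiv_atom M (p, us) (p, ts)).
  { intros M HM. split; [reflexivity |]. apply (equiv_args_of_geval M us ts); [| exact Wt].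
    apply Forall2_flip. eapply Forall2_impl; [| exact (Hgeval M HM)]. auto. }
  split; intros Htrue M HM.
  - exact (wf_true_rel_closed _ _ (ground_prog_head_closed M P hlin) _ _
             (Hts_us M HM) (Htrue M HM)).
  - exact (wf_true_rel_closed _ _ (ground_prog_head_closed M P hlin) _ _
             (Hus_ts M HM) (Htrue M HM)).
Qed.
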